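(* Let $\mathcal C$ be a closed curve and $P_1,P_2,\dots,P_N$ distinct points on $\mathcal C$ listed in cyclic order around $\mathcal C$, with the convention $P_{N+1}=P_1$ and $P_{N+2}=P_2$. Assume there are positive constants $A_0$ and $R_0$ such that (a) for all $j\in\{1,\dots,N\}$, $\frac{A_0}{2}\le\mathrm{Area}(\triangle P_jP_{j+1}P_{j+2})$; (b) for each $j\in\{1,\dots,N\}$ the points $P_j,P_{j+1},P_{j+2}$ lie on a circle of radius $\ge R_0$. Then $$N<\frac{\mathrm{Length}(\mathcal C)}{(A_0R_0)^{1/3}}.$$ *)

From HB Require Import structures.
From mathcomp Require Import all_boot all_order all_algebra.
From mathcomp Require Import all_classical all_reals all_analysis.
Set Implicit Arguments. Unset Strict Implicit. Unset Printing Implicit Defensive.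
Import Order.TTheory GRing.Theory Num.Theory.
Import numFieldNormedType.Exports.
Local Open Scope classical_set_scope.
Local Open Scope ring_scope.

Definition edist {R : realType} (p q : R * R) : R :=
  Num.sqrt ((p.1 - q.1) ^+ 2 + (p.2 - q.2) ^+ 2).

Definition tri_area {R : realType} (a b c : R * R) : R :=
  `| (b.1 - a.1) * (c.2 - a.2) - (b.2 - a.2) * (c.1 - a.1) | / 2.

Definition closed_curve {R : realType} (g : R -> R * R) : Prop :=
  {within `[0, 1], continuous g} /\ g 0 = g 1.

Fixpoint poly_len {R : realType} (s : seq (R * R)) : R :=
  match s with
  | x :: ((y :: _) as t) => edist x y + poly_len t
  | _ => 0
  end.

Definition curve_length {R : realType} (g : R -> R * R) : \bar R :=
  ereal_sup [set (poly_len (map g (0 :: rcons s 1)))%:E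
            | s in [set s : seq R | sorted <=%R s /\ all (fun t => (0 <= t <= 1)) s]].

Definition on_circle_radius_ge {R : realType} (R0 : R) (a b c : R * R) : Prop :=
  exists (o : R * R) (r : R), R0 <= r /\
    edist o a = r /\ edist o b = r /\ edist o c = r.

(* A triangle with sides x, y, z, area at least A0/2 and circumradius r >= R0
   satisfies xyz = 4 Area r >= 2 A0 R0, and z < x + y since it is not flat; hence
   2 A0 R0 < xy (x + y) <= (x + y)^3 / 4, i.e. x + y > 2 (A0 R0)^(1/3).  Adding
   these bounds over the N triangles P_j P_(j+1) P_(j+2) counts every side of the
   inscribed polygon twice, so its perimeter exceeds N (A0 R0)^(1/3); and an
   inscribed polygon is no longer than the curve. *)

From Pilot Require Import Defs.
From HB Require Import structures.
From mathcomp Require Import all_boot all_order all_algebra.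
From mathcomp Require Import all_classical all_reals all_analysis.
From mathcomp Require Import ring lra.
Import Order.TTheory GRing.Theory Num.Theory.
Local Open Scope ring_scope.

Section PlaneGeometry.
Context {R : realType}.
Implicit Types (a b c m p q : R * R).

Definition cross a b c : R :=
  (b.1 - a.1) * (c.2 - a.2) - (b.2 - a.2) * (c.1 - a.1).

Lemma edist_sqr p q : Defs.edist p q ^+ 2 = (p.1 - q.1) ^+ 2 + (p.2 - q.2) ^+ 2.
Proof. by rewrite sqr_sqrtr // addr_ge0 // sqr_ge0. Qed.

Lemma edist_ge0 p q : 0 <= Defs.edist p q.
Proof. exact: sqrtr_ge0. Qed.

Lemma edistC p q : Defs.edist p q = Defs.edist q p.
Proof. by rewrite /Defs.edist; congr Num.sqrt; ring. Qed.

(* The witness [d] is the dot product of [m - p] and [q - m]. *)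
Lemma edist_cosine_law p m q : exists d,
  Defs.edist p q ^+ 2 = Defs.edist p m ^+ 2 + Defs.edist m q ^+ 2 + 2 * d /\
  (Defs.edist p m * Defs.edist m q) ^+ 2 = d ^+ 2 + cross p m q ^+ 2.
Proof.
exists ((m.1 - p.1) * (q.1 - m.1) + (m.2 - p.2) * (q.2 - m.2)).
by rewrite exprMn !edist_sqr /cross; split; ring.
Qed.

Lemma cosine_rule_le {x y z d : R} :
  z ^+ 2 = x ^+ 2 + y ^+ 2 + 2 * d -> d ^+ 2 <= (x * y) ^+ 2 ->
  0 <= x -> 0 <= y -> 0 <= z -> z <= x + y.
Proof.
move=> cosine d_sqr_le x_ge0 y_ge0 z_ge0.
have xy_ge0 : 0 <= x * y by rewrite mulr_ge0.
have d_le : d <= x * y by nra.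
by rewrite -(@ler_pXn2r _ 2) ?nnegrE ?addr_ge0 // cosine sqrrD; lra.
Qed.

Lemma cosine_rule_lt {x y z d : R} :
  z ^+ 2 = x ^+ 2 + y ^+ 2 + 2 * d -> d ^+ 2 < (x * y) ^+ 2 ->
  0 <= x -> 0 <= y -> 0 <= z -> z < x + y.
Proof.
move=> cosine d_sqr_lt x_ge0 y_ge0 z_ge0.
have xy_ge0 : 0 <= x * y by rewrite mulr_ge0.
have d_lt : d < x * y by nra.
by rewrite -(@ltr_pXn2r _ 2) ?nnegrE ?addr_ge0 // cosine sqrrD; lra.
Qed.

Lemma edist_triangle p m q : Defs.edist p q <= Defs.edist p m + Defs.edist m q.
Proof.
have [d [cosine lagrange]] := edist_cosine_law p m q.
by apply: (cosine_rule_le cosine); rewrite ?edist_ge0 // lagrange lerDl sqr_ge0.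
Qed.

Lemma edist_triangle_lt p m q :
  cross p m q != 0 -> Defs.edist p q < Defs.edist p m + Defs.edist m q.
Proof.
move=> cross_neq0; have [d [cosine lagrange]] := edist_cosine_law p m q.
apply: (cosine_rule_lt cosine); rewrite ?edist_ge0 //.
by rewrite lagrange ltrDl exprn_even_gt0 // cross_neq0.
Qed.

Lemma edist_mul_gt0 p m q : cross p m q != 0 -> 0 < Defs.edist p m * Defs.edist m q.
Proof.
move=> cross_neq0; have [d [_ lagrange]] := edist_cosine_law p m q.
rewrite lt_def mulr_ge0 ?edist_ge0 // andbT -sqrf_eq0 lagrange gt_eqF //.
by rewrite ltr_pwDr ?sqr_ge0 // exprn_even_gt0 // cross_neq0.
Qed.

(* The classical [abc = 4 K r] for a triangle of area [K = |cross a b c| / 2]. *)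
Lemma edist_prod_circumradius {o a b c : R * R} {r : R} :
  Defs.edist o a = r -> Defs.edist o b = r -> Defs.edist o c = r ->
  Defs.edist a b * Defs.edist b c * Defs.edist a c = 2 * `|cross a b c| * r.
Proof.
move=> oa ob oc.
have r_ge0 : 0 <= r by rewrite -oa edist_ge0.
apply/eqP; rewrite -(@eqrXn2 _ 2) ?mulr_ge0 ?edist_ge0 //; apply/eqP.
have := edist_sqr o a; have := edist_sqr o b; have := edist_sqr o c.
rewrite oa ob oc => hc hb ha.
rewrite !exprMn !edist_sqr real_normK ?num_real // /cross.
set u1 := b.1 - a.1; set u2 := b.2 - a.2; set v1 := c.1 - a.1; set v2 := c.2 - a.2.
set w1 := o.1 - a.1; set w2 := o.2 - a.2.
have Eu : u1 ^+ 2 + u2 ^+ 2 = 2 * (w1 * u1 + w2 * u2) by rewrite /u1 /u2 /w1 /w2; lra.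
have Ev : v1 ^+ 2 + v2 ^+ 2 = 2 * (w1 * v1 + w2 * v2) by rewrite /v1 /v2 /w1 /w2; lra.
have Ew1 : 2 * w1 * (u1 * v2 - u2 * v1) =
  (u1 ^+ 2 + u2 ^+ 2) * v2 - (v1 ^+ 2 + v2 ^+ 2) * u2 by rewrite Eu Ev; ring.
have Ew2 : 2 * w2 * (u1 * v2 - u2 * v1) =
  u1 * (v1 ^+ 2 + v2 ^+ 2) - v1 * (u1 ^+ 2 + u2 ^+ 2) by rewrite Eu Ev; ring.
have -> : r ^+ 2 = w1 ^+ 2 + w2 ^+ 2 by rewrite ha /w1 /w2; ring.
transitivity ((2 * w1 * (u1 * v2 - u2 * v1)) ^+ 2 + (2 * w2 * (u1 * v2 - u2 * v1)) ^+ 2);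
  last by ring.
by rewrite Ew1 Ew2 /u1 /u2 /v1 /v2; ring.
Qed.

Lemma mul_add_le_cube {x y : R} : 0 <= x -> 0 <= y ->
  x * y * (x + y) <= 2 * ((x + y) / 2) ^+ 3.
Proof.
move=> x_ge0 y_ge0.
have -> : 2 * ((x + y) / 2) ^+ 3 = x * y * (x + y) + (x + y) * (x - y) ^+ 2 / 4 by field.
by rewrite lerDl divr_ge0 ?ler0n // mulr_ge0 ?addr_ge0 // sqr_ge0.
Qed.

Lemma inscribed_triangle_bound {A0 R0 : R} {a b c : R * R} : 0 < A0 -> 0 < R0 ->
  A0 / 2 <= tri_area a b c -> on_circle_radius_ge R0 a b c ->
  A0 * R0 < ((Defs.edist a b + Defs.edist b c) / 2) ^+ 3.
Proof.
move=> A0_gt0 R0_gt0 area_ge [ctr [r [R0_le [oa [ob oc]]]]].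
have cross_ge : A0 <= `|cross a b c|.
  by move: area_ge; rewrite /tri_area ler_pM2r ?invr_gt0.
have cross_neq0 : cross a b c != 0 by rewrite -normr_gt0 (lt_le_trans A0_gt0).
have AR_le : A0 * R0 <= `|cross a b c| * r by apply: ler_pM => //; apply: ltW.
have prod := edist_prod_circumradius oa ob oc.
have side_lt := edist_triangle_lt a b c cross_neq0.
have xy_gt0 := edist_mul_gt0 a b c cross_neq0.
have := mul_add_le_cube (edist_ge0 a b) (edist_ge0 b c).
have : Defs.edist a b * Defs.edist b c * Defs.edist a c <
       Defs.edist a b * Defs.edist b c * (Defs.edist a b + Defs.edist b c).
  by rewrite ltr_pM2l.
lra.
Qed.

Lemma powRVn_lt (n : nat) (a s : R) : (0 < n)%N -> 0 <= a -> 0 <= s ->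
  a < s ^+ n -> a `^ n%:R^-1 < s.
Proof.
move=> n_gt0 a_ge0 s_ge0 a_lt.
have root_pow : (a `^ n%:R^-1) ^+ n = a.
  by rewrite -powR_mulrn ?powR_ge0 // -powRrM mulVf ?powRr1 // pnatr_eq0 -lt0n.
by rewrite -(ltr_pXn2r n_gt0) ?nnegrE ?powR_ge0 // root_pow.
Qed.

Lemma inscribed_triangle_sides_gt {A0 R0 : R} {a b c : R * R} : 0 < A0 -> 0 < R0 ->
  A0 / 2 <= tri_area a b c -> on_circle_radius_ge R0 a b c ->
  2 * (A0 * R0) `^ 3^-1 < Defs.edist a b + Defs.edist b c.
Proof.
move=> A0_gt0 R0_gt0 area_ge circle.
rewrite mulrC -ltr_pdivlMr //; apply: powRVn_lt => //.
- by rewrite mulr_ge0 ?ltW.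
- by rewrite divr_ge0 ?addr_ge0 ?edist_ge0.
- exact: inscribed_triangle_bound.
Qed.

End PlaneGeometry.

Lemma sum_ordS (V : nmodType) n (F : nat -> V) :
  \sum_(j < n) F (j.+1 %% n)%N = \sum_(j < n) F j.
Proof. by rewrite [RHS](reindex_inj (@ordS_inj n)). Qed.

Lemma last_iota m n : last m (iota m.+1 n) = (m + n)%N.
Proof. by elim: n m => [|n IHn] m /=; rewrite ?addn0 // IHn addSnnS. Qed.

Section Polygon.
Context {R : realType}.

Lemma cyclic_pair_sum_gt (n : nat) (x : nat -> R) (c : R) : (0 < n)%N ->
  (forall j, (j < n)%N -> c < x j + x (j.+1 %% n)%N) ->
  n%:R * c < 2 * \sum_(j < n) x j.
Proof.
move=> n_gt0 pair_gt.
have sum_lt := @ltr_sum_nat R 0 n (fun=> c) (fun j => x j + x (j.+1 %% n)%N) n_gt0.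
have := sum_lt (fun j lt_j => pair_gt j (andP lt_j).2).
rewrite sumr_const_nat subn0 !big_mkord big_split /= sum_ordS -mulr_natl.
lra.
Qed.

Definition perimeter (n : nat) (P : nat -> R * R) : R :=
  \sum_(j < n) Defs.edist (P j) (P (j.+1 %% n)%N).

Lemma poly_len_rcons (a y : R * R) l :
  poly_len (rcons (a :: l) y) = poly_len (a :: l) + Defs.edist (last a l) y.
Proof.
elim: l a => [|b l IHl] a /=; first by rewrite add0r addr0.
by rewrite -[in RHS]addrA -IHl.
Qed.

Lemma poly_len_iota (P : nat -> R * R) m n :
  poly_len (map P (iota m n.+1)) =
  \sum_(i < n) Defs.edist (P (m + i)%N) (P (m + i.+1)%N).
Proof.
elim: n m => [|n IHn] m; first by rewrite big_ord0.
have -> : poly_len (map P (iota m n.+2)) =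
          Defs.edist (P m) (P m.+1) + poly_len (map P (iota m.+1 n.+1)) by [].
rewrite IHn big_ord_recl addn0 addn1; congr (_ + _).
by apply: eq_bigr => i _; rewrite lift0 !addSn !addnS.
Qed.

Lemma perimeterS n (P : nat -> R * R) : perimeter n.+1 P =
  \sum_(i < n) Defs.edist (P i) (P i.+1) + Defs.edist (P n) (P 0%N).
Proof.
rewrite /perimeter big_ord_recr /= modnn; congr (_ + _).
by apply: eq_bigr => i _; rewrite modn_small ?ltnS.
Qed.

Lemma perimeter_le_poly_len n (P : nat -> R * R) q :
  perimeter n.+1 P <= poly_len (q :: rcons (map P (iota 0%N n.+1)) q).
Proof.
rewrite -rcons_cons poly_len_rcons.
have -> : last q (map P (iota 0%N n.+1)) = P n by rewrite /= last_map last_iota.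
have -> : poly_len (q :: map P (iota 0%N n.+1)) =
          Defs.edist q (P 0%N) + poly_len (map P (iota 0%N n.+1)) by [].
rewrite poly_len_iota; under eq_bigr => i _ do rewrite add0n.
rewrite perimeterS.
have := edist_triangle (P n) q (P 0%N); rewrite (edistC q).
lra.
Qed.

Lemma perimeter_le_curve_length (g : R -> R * R) (t : nat -> R) n :
  (0 < n)%N -> g 0 = g 1 -> (forall i, (i < n)%N -> 0 <= t i <= 1) ->
  (forall i, (i.+1 < n)%N -> t i <= t i.+1) ->
  ((perimeter n (g \o t))%:E <= curve_length g)%E.
Proof.
case: n => // n _ g01 t_in t_le.
set s := mkseq t n.+1.
have s_sorted : sorted <=%R s.
  apply/(sortedP 0) => i; rewrite size_mkseq => lt_in.
  by rewrite !nth_mkseq ?t_le // ltnW.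
have s_in : all (fun u => 0 <= u <= 1) s.
  by apply/allP => u /mapP[i]; rewrite mem_iota => /andP[_ lt_in] ->; apply: t_in.
apply: (@le_trans _ _ (poly_len (map g (0 :: rcons s 1)))%:E); last first.
  by apply: ereal_sup_ubound; exists s.
rewrite lee_fin /= map_rcons -map_comp -g01.
exact: perimeter_le_poly_len.
Qed.

End Polygon.

Theorem theorem3p2 (R : realType) (g : R -> R * R) (N : nat)
    (P : nat -> R * R) (t : nat -> R) (A0 R0 : R) :
  closed_curve g ->
  (1 <= N)%N ->
  (* cyclic order: P_j = g(t_j) with 0 <= t_0 < t_1 < ... < t_{N-1} < 1 *)
  (forall j, (j < N)%N -> 0 <= t j < 1 /\ P j = g (t j)) ->
  (forall i j, (i < j < N)%N -> t i < t j) ->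
  (* distinct points *)
  (forall i j, (i < N)%N -> (j < N)%N -> i <> j -> P i <> P j) ->
  0 < A0 -> 0 < R0 ->
  (forall j, (j < N)%N ->
     A0 / 2 <= tri_area (P j) (P ((j + 1) %% N)%N) (P ((j + 2) %% N)%N)) ->
  (forall j, (j < N)%N ->
     on_circle_radius_ge R0 (P j) (P ((j + 1) %% N)%N) (P ((j + 2) %% N)%N)) ->
  ((N%:R)%:E < curve_length g * ((A0 * R0) `^ (3^-1))^-1%:E)%E.
Proof.
move=> [_ g01] N_gt0 Pt t_lt _ A0_gt0 R0_gt0 area_ge circle.
set k := (A0 * R0) `^ 3^-1.
have k_gt0 : 0 < k by rewrite powR_gt0 ?mulr_gt0.
set x := fun j => Defs.edist (P j) (P (j.+1 %% N)%N).
have pair_gt j : (j < N)%N -> 2 * k < x j + x (j.+1 %% N)%N.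
  move=> lt_jN; rewrite /x -[(_ %% N).+1]addn1 modnDml -[j.+1]addn1 -addnA.
  exact: inscribed_triangle_sides_gt A0_gt0 R0_gt0 (area_ge j lt_jN) (circle j lt_jN).
have perimeter_gt : N%:R * (2 * k) < 2 * perimeter N P.
  exact: cyclic_pair_sum_gt N_gt0 pair_gt.
have perimeter_Pt : perimeter N P = perimeter N (g \o t).
  by apply: eq_bigr => j _; rewrite /= !(proj2 (Pt _ _)) ?ltn_pmod.
have curve_ge : ((perimeter N (g \o t))%:E <= curve_length g)%E.
  apply: perimeter_le_curve_length => // [i lt_iN | i lt_iN].
    by have [/andP[t_ge0 t_lt1] _] := Pt i lt_iN; rewrite t_ge0 ltW.
  by rewrite ltW // t_lt // ltnSn.
apply: (@lt_le_trans _ _ ((perimeter N (g \o t)) * k^-1)%:E).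
  by rewrite lte_fin ltr_pdivlMr //; lra.
by rewrite EFinM lee_wpmul2r // lee_fin invr_ge0 ltW.
Qed.
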